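(* Let $h\ge 2$ be an integer and $\lambda_G,\lambda_L,\gamma>0$. Let $S=\{(a,b): a\ge 1,\ b\ge 1,\ a+b\le h\}\cup\{(0,1)^\ast\}$ and let $\mathbf{P}=(p_{s,t})_{s,t\in S}$, $\Phi=(\phi_{s,t})_{s,t\in S}$ be the matrices whose only non-zero entries are as follows: for $(a,b)\in S$ with $a\ge 1$, $p_{(a,b),(a-1,b+1)}=\frac{a\lambda_L}{a\lambda_L+\gamma}$ and $\phi_{(a,b),(a-1,b+1)}=\frac{a\lambda_L}{b(a\lambda_L+\gamma)}$ if $a>1$; $p_{(1,b),(0,1)^\ast}=\frac{\lambda_L}{\lambda_L+\gamma}$ and $\phi_{(1,b),(0,1)^\ast}=\frac{\lambda_L}{b(\lambda_L+\gamma)}$; $p_{(a,b),(a,b-1)}=\frac{(b-1)\gamma}{b(a\lambda_L+\gamma)}$ if $b\ge 2$; $\phi_{(a,b),(h-1,1)}=\frac{\lambda_G}{b(a\lambda_L+\gamma)}$; and $\phi_{(0,1)^\ast,(h-1,1)}=\lambda_G/\gamma$ (the row of $\mathbf{P}$ indexed by $(0,1)^\ast$ is zero). Let $\mathbf{M}=(\mathbf{I}-\mathbf{P})^{-1}\Phi$ and $\mu_G=\lambda_G/\gamma$. Let $\mathbf{y}^{(0)}$ be the row vector indexed by $S$ with $y^{(0)}_{(h-1,1)}=1$ and all other entries $0$, and for $n\ge 1$ let $\mathbf{y}^{(n)}=\mathbf{y}^{(n-1)}\mathbf{M}=\mathbf{y}^{(0)}\mathbf{M}^n$ (the vector of mean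 numbers of infectives of each type in generation $n$ of the epidemic). For $i=0,\ldots,h-1$ let $\mu_i$ be the mean number of infectives in generation $i$ of the single-household epidemic described in the context. Define $x_{n,i}$ ($n\ge 0$, $0\le i\le h-1$) by $x_{0,0}=1$, $x_{0,i}=0$ for $i\ge 1$, and for $n\ge 1$: $x_{n,0}=\mu_G\sum_{i=0}^{h-1}x_{n-1,i}$ and $x_{n,i}=\mu_i x_{n-i,0}$ for $1\le i\le h-1$ (with $x_{m,0}=0$ for $m<0$). Then for all $n=0,1,2,\ldots$, $$y^{(n)}_{(h-1,1)}=x_{n,0},$$ and, writing $y_n=\sum_{s\in S}y^{(n)}_s$ and $x_n=\sum_{j=0}^{h-1}x_{n,j}$, we have $y_n=x_n$.
   Context: Single-household Markovian SIR epidemic: a household of $h$ individuals initially contains one infective and $h-1$ susceptibles. Each infective remains infectious for an exponentially distributed time with rate $\gamma$ (independently), during which it makes contacts with each other given household member at the points of independent homogeneous Poisson processes of rate $\lambda_L$; a contacted susceptible immediately becomes infectious. Generations: the initial infective is in generation $0$, and an individual infected by an infective of generation $i-1$ is in generation $i$. In the full household model, each infective additionally makes global contacts at rate $\lambda_G$, each creating a new infectious household in state $(h-1,1)$; a state $(a,b)$ denotes a household with $a$ susceptibles and $b$ infectives, and states with no susceptibles are amalgamated into $(0,1)^\ast$. $\mathbf{M}$ is the mean reproduction matrix: $m_{s,t}$ is the mean number of type-$t$ infectives generated by an individual infected as a member of a type-$s$ infectious unit. The quantity $x_{n,i}$ is the mean number of individuals in generation $n$ of the epidemic who belong to generation $i$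 of their household epidemic. *)

From HB Require Import structures.
From mathcomp Require Import all_boot all_order all_algebra.
Set Implicit Arguments.
Unset Strict Implicit.
Unset Printing Implicit Defensive.
Import Order.TTheory GRing.Theory Num.Theory.
Local Open Scope ring_scope.

(* A state (a,b) : a susceptibles, b infectives, with a >= 1, b >= 1,
   a + b <= h; the amalgamated state (0,1)^* is encoded as the pair (0,1). *)
Definition stateP (h : nat) (x : 'I_h.+1 * 'I_h.+1) : bool :=
  [&& (0 < x.1)%N, (0 < x.2)%N & (x.1 + x.2 <= h)%N]
  || ((x.1 == 0%N :> nat) && (x.2 == 1%N :> nat)).

Record hstate (h : nat) := HState { hval : 'I_h.+1 * 'I_h.+1; _ : @stateP h hval }.
HB.instance Definition _ h := [isSub for @hval h].
HB.instance Definition _ h := [Equality of hstate h by <:].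
HB.instance Definition _ h := [Choice of hstate h by <:].
HB.instance Definition _ h := [Countable of hstate h by <:].
HB.instance Definition _ h := [Finite of hstate h by <:].

Definition sa (h : nat) (s : hstate h) : nat := (val s).1.
Definition sb (h : nat) (s : hstate h) : nat := (val s).2.
Definition is_star (h : nat) (s : hstate h) : bool := sa s == 0%N.
Definition is_init (h : nat) (s : hstate h) : bool :=
  (sa s == h.-1) && (sb s == 1%N).

Definition Pent (R : realFieldType) (lamL gam : R) (h : nat) (s t : hstate h) : R :=
  let a := sa s in let b := sb s in let ta := sa t in let tb := sb t in
  if is_star s then 0 else
      ([&& (1 < a)%N, ta == a.-1 & tb == b.+1])%:R
        * (a%:R * lamL / (a%:R * lamL + gam))
    + ((a == 1%N) && is_star t)%:R * (lamL / (lamL + gam))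
    + ([&& (2 <= b)%N, ta == a & tb == b.-1])%:R
        * ((b.-1)%:R * gam / (b%:R * (a%:R * lamL + gam))).

Definition Phient (R : realFieldType) (lamG lamL gam : R) (h : nat) (s t : hstate h) : R :=
  let a := sa s in let b := sb s in let ta := sa t in let tb := sb t in
  if is_star s then (is_init t)%:R * (lamG / gam) else
      ([&& (1 < a)%N, ta == a.-1 & tb == b.+1])%:R
        * (a%:R * lamL / (b%:R * (a%:R * lamL + gam)))
    + ((a == 1%N) && is_star t)%:R * (lamL / (b%:R * (lamL + gam)))
    + (is_init t)%:R * (lamG / (b%:R * (a%:R * lamL + gam))).

Definition Pmx (R : realFieldType) (lamL gam : R) (h : nat) : 'M[R]_#|{: hstate h}| :=
  \matrix_(i, j) Pent lamL gam (enum_val i) (enum_val j).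

Definition Phimx (R : realFieldType) (lamG lamL gam : R) (h : nat) : 'M[R]_#|{: hstate h}| :=
  \matrix_(i, j) Phient lamG lamL gam (enum_val i) (enum_val j).

Definition Mmx (R : realFieldType) (lamG lamL gam : R) (h : nat) : 'M[R]_#|{: hstate h}| :=
  invmx (1%:M - Pmx lamL gam h) *m Phimx lamG lamL gam h.

Definition y0 (R : realFieldType) (h : nat) : 'rV[R]_#|{: hstate h}| :=
  \row_j (is_init (enum_val j))%:R.

Definition ygen (R : realFieldType) (lamG lamL gam : R) (h n : nat) : 'rV[R]_#|{: hstate h}| :=
  iter n (fun v => v *m Mmx lamG lamL gam h) (y0 R h).

Definition yent (R : realFieldType) (lamG lamL gam : R) (h n : nat) (s : hstate h) : R :=
  ygen lamG lamL gam h n 0 (enum_rank s).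

(* The household epidemic is the continuous-time Markov chain with state
   (a, c) where a = number of susceptibles and c j = number of currently
   infectious individuals of (household) generation j.  From state (a,c),
   each generation-j infective recovers at rate gam (c j -> c j - 1) and
   generation-j infectives infect at total rate lamL * a * c j
   (a -> a - 1, c (j+1) -> c (j+1) + 1).  Means of counts only depend on the
   embedded jump chain; hh_mean fuel a c i is the expected number of future
   infections in generation i starting from (a,c) (fuel bounds the number of
   jumps; 2a + sum c decreases by one at each jump). *)
Definition upd (c : nat -> nat) (j v : nat) : nat -> nat :=
  fun k => if k == j then v else c k.

Fixpoint hh_mean (R : realFieldType) (lamL gam : R) (h fuel a : nat) (c : nat -> nat)
    (i : nat) : R :=
  match fuel with
  | 0%N => 0
  | fuel'.+1 =>
    let b := (\sum_(j < h) c j)%N in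
    if b == 0%N then 0 else
    let tot := b%:R * (a%:R * lamL + gam) in
    \sum_(j < h)
      ( (c j)%:R * gam / tot * hh_mean lamL gam h fuel' a (upd c j (c j).-1) i
      + (c j)%:R * (a%:R * lamL) / tot *
          ((i == j.+1)%:R
           + hh_mean lamL gam h fuel' a.-1 (upd c j.+1 (c j.+1).+1) i))
  end.

Definition mu (R : realFieldType) (lamL gam : R) (h i : nat) : R :=
  (i == 0%N)%:R
  + hh_mean lamL gam h (2 * h) h.-1 (fun k => (k == 0%N : nat)) i.

(* xhist n = [:: x_n; x_{n-1}; ...; x_0], each x_m as a function i |-> x_{m,i}
   (zero for i >= h). *)
Definition x_init (R : realFieldType) (i : nat) : R := (i == 0%N)%:R.

Definition x_step (R : realFieldType) (lamG lamL gam : R) (h : nat)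
    (hist : seq (nat -> R)) : nat -> R :=
  fun i =>
    if (h <= i)%N then 0 else
    if i == 0%N then lamG / gam * \sum_(k < h) (head (fun _ => 0) hist) k
    else mu lamL gam h i * (nth (fun _ => 0) hist i.-1) 0%N.

Fixpoint xhist (R : realFieldType) (lamG lamL gam : R) (h n : nat) : seq (nat -> R) :=
  match n with
  | 0%N => [:: @x_init R]
  | n'.+1 => let hs := xhist lamG lamL gam h n' in x_step lamG lamL gam h hs :: hs
  end.

Definition xgen (R : realFieldType) (lamG lamL gam : R) (h n i : nat) : R :=
  head (fun _ => 0) (xhist lamG lamL gam h n) i.

(* Let D_e(a,b) be the mean number of individuals infected e household
   generations below a given infective of a unit with a susceptibles and b
   infectives (D_0 = 1).  Conditioning on the first event of the unit
   gives a recursion for D, and the household chain started from a generation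
   profile c has mean generation-i size sum_k c_k D_(i-k)(a,b); in particular
   mu_i = D_i(h-1,1).
   Read as column vectors indexed by S, the same first-event recursion says
   M D_e = D_(e+1) + mu_G mu_e 1 and M 1_(h-1,1) = mu_G 1 (I - P is invertible
   since every transition of P lowers 2a + b).  Hence Y_n(e) = y^(n) D_e obeys
   Y_(n+1)(e) = Y_n(e+1) + mu_G mu_e Y_n(0), solved by
   Y_n(e) = sum_j x_(n-j,0) mu_(j+e).  The x-recursion gives the same convolution
   for x_n, so y_n = Y_n(0) = x_n and y^(n+1)_(h-1,1) = mu_G Y_n(0) = x_(n+1,0). *)

From mathcomp Require Import all_boot all_order all_algebra.
From mathcomp Require Import zify ring lra.
Import Order.TTheory GRing.Theory Num.Theory.
Local Open Scope ring_scope.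
Set Implicit Arguments. Unset Strict Implicit. Unset Printing Implicit Defensive.

Section States.
Variables (R : realFieldType) (h : nat).

Definition valid_ab (a b : nat) : bool :=
  [&& (0 < a)%N, (0 < b)%N & (a + b <= h)%N] || ((a == 0%N) && (b == 1%N)).

Lemma hstate_valid (s : hstate h) :
  [/\ (sa s <= h)%N, (sb s <= h)%N & valid_ab (sa s) (sb s)].
Proof.
case: s => [[a b] Hab]; rewrite /sa /sb /=.
by split; [rewrite -ltnS | rewrite -ltnS |].
Qed.

Lemma is_starE (s : hstate h) : is_star s = (sa s == 0%N) && (sb s == 1%N).
Proof.
rewrite /is_star; case: (hstate_valid s) => _ _.
by case: eqP => //= ->; rewrite /valid_ab ltnn.
Qed.

Lemma nonstar_valid (s : hstate h) : ~~ is_star s ->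
  [/\ (0 < sa s)%N, (0 < sb s)%N & (sa s + sb s <= h)%N].
Proof.
rewrite is_starE; case: (hstate_valid s) => _ _.
by case/orP=> [/and3P[-> -> ->]|->].
Qed.

Lemma hstate_ab_inj (s t : hstate h) : sa s = sa t -> sb s = sb t -> s = t.
Proof.
case: s t => [[a b] ?] [[a' b'] ?]; rewrite /sa /sb /= => Ea Eb.
by apply: val_inj; congr pair; apply: val_inj.
Qed.

Lemma sum_enum_rank (G : 'I_#|{: hstate h}| -> R) :
  \sum_i G i = \sum_(t : hstate h) G (enum_rank t).
Proof. by rewrite [RHS]big_enum_val; apply: eq_bigr => i _; rewrite enum_valK. Qed.

Lemma sum_hstate_at (B : bool) (a b : nat) (g : nat -> nat -> R) :
  (0 < h)%N -> (B -> valid_ab a b) ->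
  \sum_(t : hstate h) (B && ((sa t == a) && (sb t == b)))%:R * g (sa t) (sb t)
  = B%:R * g a b.
Proof.
move=> h_gt0; case: B => [/(_ isT) Vab|_]; last by rewrite big1 ?mul0r // => t _; rewrite mul0r.
have [Ha Hb] : (a < h.+1)%N /\ (b < h.+1)%N.
  by case/orP: Vab => [/and3P[? ? ?]|/andP[/eqP-> /eqP->]]; lia.
pose t0 : hstate h := @HState h (Ordinal Ha, Ordinal Hb) Vab.
rewrite (bigD1 t0) //= big1 ?addr0 => [|t Ht]; first by rewrite !eqxx.
case: eqP => [Ea|]; case: eqP => [Eb|] //= *; rewrite ?mul0r //.
by move: Ht; rewrite (hstate_ab_inj (t := t0) Ea Eb) eqxx.
Qed.

End States.

Section GenMean.
Variables (R : realFieldType) (lamL gam : R).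

(* [gen_mean e a b] is D_e(a,b).  Out of the total rate b (a lamL + gam), another
   infective recovers at rate (b-1) gam, and an infection, at rate b a lamL, moves
   the unit to (a-1, b+1); with rate a lamL it is made by the tagged infective,
   whose child then contributes D_(e-1)(a-1, b+1).  The recursion runs on e, then
   a, then b: [gen_mean_row same_e prev_e a] is b |-> D_(e+1)(a,b), given
   same_e = D_(e+1)(a-1,.) and prev_e = D_e(a-1,.). *)
Fixpoint gen_mean_row (same_e prev_e : nat -> R) (a b : nat) : R :=
  match b with
  | 0%N => 0
  | b'.+1 => b'%:R * gam / (b'.+1%:R * (a%:R * lamL + gam)) * gen_mean_row same_e prev_e a b'
           + a%:R * lamL / (a%:R * lamL + gam) * same_e b'.+2
           + a%:R * lamL / (b'.+1%:R * (a%:R * lamL + gam)) * prev_e b'.+2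
  end.

Fixpoint gen_mean_col (prev : nat -> nat -> R) (a : nat) : nat -> R :=
  match a with
  | 0%N => fun _ => 0
  | a'.+1 => gen_mean_row (gen_mean_col prev a') (prev a') a'.+1
  end.

Fixpoint gen_mean (e : nat) : nat -> nat -> R :=
  match e with
  | 0%N => fun _ _ => 1
  | e'.+1 => gen_mean_col (gen_mean e')
  end.

Lemma gen_mean0 a b : gen_mean 0 a b = 1. Proof. by []. Qed.

Lemma gen_meanS0 e b : gen_mean e.+1 0 b = 0. Proof. by []. Qed.

Lemma gen_meanSE e a b : (0 < b)%N -> gen_mean e.+1 a b =
  (b.-1)%:R * gam / (b%:R * (a%:R * lamL + gam)) * gen_mean e.+1 a b.-1
  + a%:R * lamL / (a%:R * lamL + gam) * gen_mean e.+1 a.-1 b.+1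
  + a%:R * lamL / (b%:R * (a%:R * lamL + gam)) * gen_mean e a.-1 b.+1.
Proof. by case: a => [|a]; case: b => // b _ /=; ring. Qed.

Lemma gen_mean_eq0 e a b : (a < e)%N -> gen_mean e a b = 0.
Proof.
elim: e a b => [|e IHe] a b //; elim: a b => [|a IHa] b lt_ae //.
elim: b => [|b IHb] //=.
rewrite -[gen_mean_row _ _ _ b]/(gen_mean e.+1 a.+1 b) IHb.
by rewrite -[gen_mean_col _ _]/(gen_mean e.+1 a) IHa ?IHe //; [ring | lia].
Qed.

Lemma gen_mean_at0 e b : gen_mean e 0 b = (e == 0%N)%:R.
Proof. by case: e. Qed.

End GenMean.

Arguments gen_mean : simpl never.

Section GenSum.
Variables (R : realFieldType) (lamL gam : R) (h : nat).

Definition bsum (c : nat -> nat) : nat := (\sum_(j < h) c j)%N.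

Definition wsum (c : nat -> nat) (F : nat -> R) : R := \sum_(k < h) (c k)%:R * F k.

Definition gen_sum (a b : nat) (c : nat -> nat) (i : nat) : R :=
  wsum c (fun k => (k < i)%N%:R * gen_mean lamL gam (i - k) a b).

Lemma wsum_bsum0 c F : bsum c = 0%N -> wsum c F = 0.
Proof.
move=> c0; apply: big1 => k _.
suff -> : c k = 0%N by rewrite mul0r.
by apply/eqP; rewrite -leqn0 -c0 /bsum (bigD1 k) //= leq_addr.
Qed.

Lemma upd_sum (T : nmodType) c j v (F : nat -> nat -> T) : (j < h)%N ->
  \sum_(k < h) F k (upd c j v k) + F j (c j) = \sum_(k < h) F k (c k) + F j v.
Proof.
move=> lt_jh; rewrite (bigD1 (Ordinal lt_jh)) // [in RHS](bigD1 (Ordinal lt_jh)) //=.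
rewrite /upd eqxx (eq_bigr (fun k : 'I_h => F k (c k))) => [|k]; last first.
  by move=> /negbTE; rewrite -(inj_eq val_inj) /= => ->.
by rewrite addrAC [RHS]addrAC [F j v + _]addrC.
Qed.

Lemma bsum_upd c j v : (j < h)%N -> (bsum (upd c j v) + c j = bsum c + v)%N.
Proof. exact: (upd_sum (T := nat) c v (fun _ n => n)). Qed.

Lemma wsum_upd c j v F : (j < h)%N ->
  wsum (upd c j v) F = wsum c F + (v%:R - (c j)%:R) * F j.
Proof.
move=> lt_jh; apply: (addIr ((c j)%:R * F j)).
rewrite /wsum (upd_sum c v (fun k n => n%:R * F k)) //; ring.
Qed.

Lemma gen_sum_upd a b c j v i : (j < h)%N ->
  gen_sum a b (upd c j v) i
  = gen_sum a b c i + (v%:R - (c j)%:R) * ((j < i)%N%:R * gen_mean lamL gam (i - j) a b).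
Proof. exact: wsum_upd. Qed.

Lemma gen_mean_shift i j a b :
  (i == j.+1)%:R + (j.+1 < i)%N%:R * gen_mean lamL gam (i - j.+1) a b
  = (j < i)%N%:R * gen_mean lamL gam (i - j.+1) a b.
Proof.
by case: (ltngtP j.+1 i) => [_|_|<-]; rewrite ?subnn ?gen_mean0 /=; ring.
Qed.

Lemma gen_sumSE a b c i :
  gen_sum a b.+1 c i =
    b%:R * gam / (b.+1%:R * (a%:R * lamL + gam)) * gen_sum a b c i
  + a%:R * lamL / (a%:R * lamL + gam) * gen_sum a.-1 b.+2 c i
  + a%:R * lamL / (b.+1%:R * (a%:R * lamL + gam))
    * wsum c (fun k => (k < i)%N%:R * gen_mean lamL gam (i - k.+1) a.-1 b.+2).
Proof.
rewrite /gen_sum /wsum !mulr_sumr -!big_split /=; apply: eq_bigr => k _.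
case: (ltnP k i) => [lt_ki|]; last by rewrite !mul0r !mulr0 !addr0.
by rewrite -[(i - k)%N]prednK ?subn_gt0 // gen_meanSE // -subnS; ring.
Qed.

End GenSum.

Section HouseholdMeans.
Variables (R : realFieldType) (lamL gam : R) (h : nat).
Hypotheses (lamL_gt0 : 0 < lamL) (gam_gt0 : 0 < gam).

Lemma gen_sum_step a b c i :
  bsum h c = b.+1 -> (forall k, (0 < c k)%N -> (a + k < h)%N) ->
  let tot := b.+1%:R * (a%:R * lamL + gam) in
  \sum_(j < h)
     ( (c j)%:R * gam / tot * gen_sum lamL gam h a b (upd c j (c j).-1) i
     + (c j)%:R * (a%:R * lamL) / tot *
         ((i == j.+1)%:R + gen_sum lamL gam h a.-1 b.+2 (upd c j.+1 (c j.+1).+1) i))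
  = gen_sum lamL gam h a b.+1 c i.
Proof.
move=> bsum_c inv_c tot.
have den_gt0 : 0 < a%:R * lamL + gam by rewrite ltr_wpDl ?mulr_ge0 ?ler0n ?ltW.
pose G1 j := (j < i)%N%:R * gen_mean lamL gam (i - j) a b.
pose G3 j := (j < i)%N%:R * gen_mean lamL gam (i - j.+1) a.-1 b.+2.
rewrite gen_sumSE (eq_bigr (fun j : 'I_h =>
      gam / tot * ((c j)%:R * gen_sum lamL gam h a b c i) - gam / tot * ((c j)%:R * G1 j)
    + a%:R * lamL / tot * ((c j)%:R * gen_sum lamL gam h a.-1 b.+2 c i)
    + a%:R * lamL / tot * ((c j)%:R * G3 j))) => [|j _]; last first.
  have [->|cj_gt0] := posnP (c j); first by rewrite !mul0r !mulr0; ring.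
  rewrite gen_sum_upd //; have -> : ((c j).-1%:R : R) = (c j)%:R - 1.
    by rewrite -[in RHS](prednK cj_gt0) mulrSr addrK.
  have [a0|a_gt0] := posnP a; first by rewrite /G1 /G3 a0 !mul0r; ring.
  have lt_j1h : (j.+1 < h)%N by have := inv_c j cj_gt0; lia.
  by rewrite gen_sum_upd // mulrSr /G1 /G3 -gen_mean_shift; ring.
rewrite !big_split /= sumrN -!mulr_sumr -!mulr_suml -natr_sum -/(bsum h c) bsum_c.
rewrite -[\sum_(j < h) _ * G1 j]/(gen_sum lamL gam h a b c i) -/(wsum h c G3) /G3 /tot.
field; by rewrite lt0r_neq0 //= addrC natr1 pnatr_eq0.
Qed.

(* The invariant keeps every generation that can still infect below h, where
   [hh_mean] tracks it. *)
Lemma hh_mean_gen_sum fuel a c i :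
  (forall k, (0 < c k)%N -> (a + k < h)%N) -> (2 * a + bsum h c <= fuel)%N ->
  hh_mean lamL gam h fuel a c i = gen_sum lamL gam h a (bsum h c) c i.
Proof.
elim: fuel a c => [|fuel IH] a c inv_c fuel_c; first by rewrite /gen_sum wsum_bsum0 //; lia.
have [c0|[b bsum_c]] : bsum h c = 0%N \/ exists b, bsum h c = b.+1.
- by case: (bsum h c) => [|b]; [left | right; exists b].
- by rewrite /= -/(bsum h c) c0 /gen_sum wsum_bsum0.
rewrite /= -/(bsum h c) bsum_c -gen_sum_step //; apply: eq_bigr => j _.
have [cj0|cj_gt0] := posnP (c j); first by rewrite cj0 !mul0r.
have bsum_rec : bsum h (upd c j (c j).-1) = b.
  by have := bsum_upd c (c j).-1 (ltn_ord j); lia.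
rewrite IH ?bsum_rec; last 2 first.
- by move=> k; rewrite /upd; case: eqP => [->|_] ck_gt0; apply: inv_c.
- lia.
have [a0|a_gt0] := posnP a; first by rewrite a0 !mul0r mulr0 !mul0r.
have lt_j1h : (j.+1 < h)%N by have := inv_c j cj_gt0; lia.
have bsum_inf : bsum h (upd c j.+1 (c j.+1).+1) = b.+2.
  by have := bsum_upd c (c j.+1).+1 lt_j1h; lia.
rewrite IH ?bsum_inf //; last lia.
move=> k; rewrite /upd; case: eqP => [->|_] ck_gt0; first by have := inv_c j cj_gt0; lia.
by have := inv_c k ck_gt0; lia.
Qed.

Lemma mu_gen_mean i : (0 < h)%N -> mu lamL gam h i = gen_mean lamL gam i h.-1 1.
Proof.
move=> h_gt0; pose c k := (k == 0%N : nat).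
have bsum_c : bsum h c = 1%N.
  rewrite /bsum (bigD1 (Ordinal h_gt0)) //= big1 // => k.
  by rewrite -(inj_eq val_inj) /c /= => /negbTE ->.
rewrite /mu hh_mean_gen_sum; first last.
- by rewrite bsum_c; lia.
- by rewrite /c => k; case: eqP => // ->; lia.
rewrite bsum_c /gen_sum /wsum (bigD1 (Ordinal h_gt0)) //= big1 => [|k].
  by case: i => [|i]; rewrite /c /= ?subn0 ?gen_mean0; ring.
by rewrite -(inj_eq val_inj) /c /= => /negbTE ->; rewrite mul0r.
Qed.

Lemma mu0 : (0 < h)%N -> mu lamL gam h 0 = 1.
Proof. by move=> h_gt0; rewrite mu_gen_mean. Qed.

Lemma mu_eq0 d : (0 < h)%N -> (h <= d)%N -> mu lamL gam h d = 0.
Proof. by move=> h_gt0 le_hd; rewrite mu_gen_mean ?gen_mean_eq0 // prednK. Qed.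

End HouseholdMeans.

Lemma unitmx_1B_nilpotent (R : comUnitRingType) n (A : 'M[R]_n) k :
  iter k (mulmx A) 1%:M = 0 -> (1%:M - A) \in unitmx.
Proof.
move=> Ak0; have telescope m :
    (1%:M - A) *m \sum_(i < m) iter i (mulmx A) 1%:M = 1%:M - iter m (mulmx A) 1%:M.
  elim: m => [|m IHm]; first by rewrite big_ord0 mulmx0 subrr.
  by rewrite big_ord_recr mulmxDr IHm /= mulmxBl mul1mx addrA subrK.
by have := telescope k; rewrite Ak0 subr0 => /mulmx1_unit[].
Qed.

Section Nilpotent.
Variables (R : realFieldType) (h : nat) (lamL gam : R).

Definition weight (s : hstate h) : nat := (2 * sa s + sb s)%N.

Lemma Pent_eq0 s t : (weight s <= weight t)%N -> Pent lamL gam s t = 0.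
Proof.
rewrite /Pent /weight; case: ifP => // /negbT/nonstar_valid[a_gt0 b_gt0 _] le_st.
have -> : [&& (1 < sa s)%N, sa t == (sa s).-1 & sb t == (sb s).+1] = false.
  by apply/negbTE/and3P => -[? /eqP ? /eqP ?]; lia.
have -> : (sa s == 1%N) && is_star t = false.
  by rewrite is_starE; apply/negbTE/and3P => -[/eqP ? /eqP ? /eqP ?]; lia.
have -> : [&& (2 <= sb s)%N, sa t == sa s & sb t == (sb s).-1] = false.
  by apply/negbTE/and3P => -[? /eqP ? /eqP ?]; lia.
by rewrite !mul0r !addr0.
Qed.

Lemma Pmx_iter_eq0 k s t : (weight s < weight t + k)%N ->
  iter k (mulmx (Pmx lamL gam h)) 1%:M (enum_rank s) (enum_rank t) = 0.
Proof.
elim: k s t => [|k IHk] s t lt_st.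
  by rewrite /= mxE (inj_eq enum_rank_inj); case: eqP lt_st => // ->; rewrite addn0 ltnn.
rewrite /= mxE sum_enum_rank big1 // => u _; rewrite mxE !enum_rankK.
have [le_su|lt_us] := leqP (weight s) (weight u); first by rewrite Pent_eq0 ?mul0r.
by rewrite IHk ?mulr0 //; lia.
Qed.

Lemma Pmx_nilpotent : iter (3 * h).+1 (mulmx (Pmx lamL gam h)) 1%:M = 0.
Proof.
apply/matrixP => i j; rewrite -(enum_valK i) -(enum_valK j) Pmx_iter_eq0 ?mxE //.
move: (enum_val i) (enum_val j) => s t.
by case: (hstate_valid s) (hstate_valid t) => ? ? _ [? ? _]; rewrite /weight; lia.
Qed.

Lemma unitmx_1BPmx : (1%:M - Pmx lamL gam h) \in unitmx.
Proof. exact: unitmx_1B_nilpotent Pmx_nilpotent. Qed.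

End Nilpotent.

Section Columns.
Variables (R : realFieldType) (h : nat).

Local Notation N := #|{: hstate h}|.

Definition abcol (g : nat -> nat -> R) : 'cV[R]_N :=
  \col_i g (sa (enum_val i)) (sb (enum_val i)).

Lemma abcolE g s : abcol g (enum_rank s) 0 = g (sa s) (sb s).
Proof. by rewrite mxE enum_rankK. Qed.

Lemma mul_state_mx_abcol (F : hstate h -> hstate h -> R) g s :
  ((\matrix_(i, j) F (enum_val i) (enum_val j)) *m abcol g) (enum_rank s) 0
  = \sum_t F s t * g (sa t) (sb t).
Proof. by rewrite mxE sum_enum_rank; apply: eq_bigr => t _; rewrite !mxE !enum_rankK. Qed.

Lemma mul_row_abcol (v : 'rV[R]_N) g :
  (v *m abcol g) 0 0 = \sum_t v 0 (enum_rank t) * g (sa t) (sb t).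
Proof. by rewrite mxE sum_enum_rank; apply: eq_bigr => t _; rewrite abcolE. Qed.

End Columns.

Section Transfer.
Variables (R : realFieldType) (h : nat) (lamG lamL gam : R).
Hypotheses (h_ge2 : (2 <= h)%N) (lamL_gt0 : 0 < lamL) (gam_gt0 : 0 < gam).

Definition P_apply (g : nat -> nat -> R) (a b : nat) : R :=
    (1 < a)%N%:R * (a%:R * lamL / (a%:R * lamL + gam)) * g a.-1 b.+1
  + (a == 1%N)%:R * (lamL / (lamL + gam)) * g 0%N 1%N
  + (2 <= b)%N%:R * ((b.-1)%:R * gam / (b%:R * (a%:R * lamL + gam))) * g a b.-1.

Definition Phi_apply (g : nat -> nat -> R) (a b : nat) : R :=
    (1 < a)%N%:R * (a%:R * lamL / (b%:R * (a%:R * lamL + gam))) * g a.-1 b.+1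
  + (a == 1%N)%:R * (lamL / (b%:R * (lamL + gam))) * g 0%N 1%N
  + lamG / (b%:R * (a%:R * lamL + gam)) * g h.-1 1%N.

Let h_gt0 : (0 < h)%N. Proof. exact: ltnW. Qed.

Lemma sum_Pent_nonstar (s : hstate h) g : ~~ is_star s ->
  \sum_(t : hstate h) Pent lamL gam s t * g (sa t) (sb t) = P_apply g (sa s) (sb s).
Proof.
move=> ns; have [a_gt0 b_gt0 ab_le] := nonstar_valid ns.
rewrite /Pent (negbTE ns) (eq_bigr (fun t : hstate h =>
    (sa s)%:R * lamL / ((sa s)%:R * lamL + gam) *
      ([&& (1 < sa s)%N, sa t == (sa s).-1 & sb t == (sb s).+1]%:R * g (sa t) (sb t))
  + lamL / (lamL + gam) *
      (((sa s == 1%N) && ((sa t == 0%N) && (sb t == 1%N)))%:R * g (sa t) (sb t))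
  + (sb s).-1%:R * gam / ((sb s)%:R * ((sa s)%:R * lamL + gam)) *
      ([&& (2 <= sb s)%N, sa t == sa s & sb t == (sb s).-1]%:R * g (sa t) (sb t))))
  => [|t _]; last by rewrite is_starE; ring.
rewrite !big_split -!mulr_sumr !sum_hstate_at //; first by rewrite /P_apply /=; ring.
all: by rewrite /valid_ab => ?; apply/orP; left; apply/and3P; split; lia.
Qed.

Lemma sum_Phient_nonstar (s : hstate h) g : ~~ is_star s ->
  \sum_(t : hstate h) Phient lamG lamL gam s t * g (sa t) (sb t) = Phi_apply g (sa s) (sb s).
Proof.
move=> ns; have [a_gt0 b_gt0 ab_le] := nonstar_valid ns.
rewrite /Phient (negbTE ns) (eq_bigr (fun t : hstate h =>
    (sa s)%:R * lamL / ((sb s)%:R * ((sa s)%:R * lamL + gam)) *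
      ([&& (1 < sa s)%N, sa t == (sa s).-1 & sb t == (sb s).+1]%:R * g (sa t) (sb t))
  + lamL / ((sb s)%:R * (lamL + gam)) *
      (((sa s == 1%N) && ((sa t == 0%N) && (sb t == 1%N)))%:R * g (sa t) (sb t))
  + lamG / ((sb s)%:R * ((sa s)%:R * lamL + gam)) *
      ((true && ((sa t == h.-1) && (sb t == 1%N)))%:R * g (sa t) (sb t))))
  => [|t _]; last by rewrite is_starE /is_init /=; ring.
rewrite !big_split -!mulr_sumr !sum_hstate_at //; first by rewrite /Phi_apply /=; ring.
all: by rewrite /valid_ab => ?; apply/orP; left; apply/and3P; split; lia.
Qed.

Lemma sum_Pent_star (s : hstate h) g : is_star s ->
  \sum_(t : hstate h) Pent lamL gam s t * g (sa t) (sb t) = 0.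
Proof. by move=> st; rewrite /Pent st big1 // => t _; rewrite mul0r. Qed.

Lemma sum_Phient_star (s : hstate h) g : is_star s ->
  \sum_(t : hstate h) Phient lamG lamL gam s t * g (sa t) (sb t) = lamG / gam * g h.-1 1%N.
Proof.
move=> st; rewrite /Phient st (eq_bigr (fun t : hstate h => lamG / gam *
    ((true && ((sa t == h.-1) && (sb t == 1%N)))%:R * g (sa t) (sb t)))) => [|t _].
  rewrite -mulr_sumr sum_hstate_at ?mul1r // /valid_ab => _.
  by apply/orP; left; apply/and3P; split; lia.
by rewrite /is_init /=; ring.
Qed.

Lemma Mmx_abcol g1 g2 :
  g1 0%N 1%N = lamG / gam * g2 h.-1 1%N ->
  (forall a b, (0 < a)%N -> (0 < b)%N -> (a + b <= h)%N ->
     g1 a b - P_apply g1 a b = Phi_apply g2 a b) ->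
  Mmx lamG lamL gam h *m abcol h g2 = abcol h g1.
Proof.
move=> g_star g_nonstar.
suff IP_g1 : (1%:M - Pmx lamL gam h) *m abcol h g1 = Phimx lamG lamL gam h *m abcol h g2.
  by rewrite /Mmx -mulmxA -IP_g1 mulKmx // unitmx_1BPmx.
apply/matrixP => i j; rewrite (ord1 j) -(enum_valK i); move: (enum_val i) => s.
rewrite mulmxBl mul1mx [LHS]mxE [X in _ + X]mxE abcolE !mul_state_mx_abcol.
have [st|ns] := boolP (is_star s).
  rewrite sum_Pent_star // sum_Phient_star // subr0.
  by move: st; rewrite is_starE => /andP[/eqP-> /eqP->].
have [a_gt0 b_gt0 ab_le] := nonstar_valid ns.
by rewrite sum_Pent_nonstar // sum_Phient_nonstar //; apply: g_nonstar.
Qed.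

Let den_neq0 (x : R) : 0 <= x -> x * lamL + gam != 0.
Proof. by move=> x_ge0; rewrite lt0r_neq0 // ltr_wpDl ?mulr_ge0 // ltW. Qed.

Let two_add_neq0 (x : R) : 0 <= x -> 2 + x != 0.
Proof. by move=> x_ge0; rewrite lt0r_neq0 // ltr_wpDr. Qed.

Let lamL_gam_neq0 : lamL + gam != 0.
Proof. by rewrite lt0r_neq0 ?addr_gt0. Qed.

Lemma Mmx_gen_mean d :
  Mmx lamG lamL gam h *m abcol h (gen_mean lamL gam d)
  = abcol h (fun a b => gen_mean lamL gam d.+1 a b + lamG / gam * mu lamL gam h d).
Proof.
rewrite mu_gen_mean //; apply: Mmx_abcol => [|a b a_gt0 b_gt0 ab_le].
  by rewrite gen_meanS0 add0r.
rewrite /P_apply /Phi_apply gen_meanSE //.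
case: a a_gt0 ab_le => // -[|a] _ ab_le; case: b b_gt0 ab_le => // -[|b] _ ab_le.
all: rewrite /= ?gen_meanS0 ?gen_mean_at0; field.
all: by rewrite ?den_neq0 ?two_add_neq0 ?lamL_gam_neq0 ?lt0r_neq0 ?addr_ge0 ?ler0n.
Qed.

Lemma Mmx_init :
  Mmx lamG lamL gam h *m abcol h (fun a b => ((a == h.-1) && (b == 1%N))%:R)
  = abcol h (fun _ _ => lamG / gam).
Proof.
apply: Mmx_abcol => [|a b a_gt0 b_gt0 ab_le]; first by rewrite !eqxx mulr1.
rewrite /P_apply /Phi_apply !eqxx andbT.
have -> : (0%N == h.-1) = false by lia.
have -> : (b.+1 == 1%N) = false by lia.
rewrite andbF.
case: a a_gt0 ab_le => // -[|a] _ ab_le; case: b b_gt0 ab_le => // -[|b] _ ab_le.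
all: rewrite /=; field.
all: by rewrite ?den_neq0 ?two_add_neq0 ?lamL_gam_neq0 ?lt0r_neq0 ?addr_ge0 ?ler0n.
Qed.

End Transfer.

Lemma big_ord_widen_eq0 (R : nmodType) m n (F : nat -> R) : (m <= n)%N ->
  (forall j, (m <= j < n)%N -> F j = 0) -> \sum_(j < m) F j = \sum_(j < n) F j.
Proof.
move=> le_mn F0; rewrite (big_ord_widen n F le_mn) big_mkcond; apply: eq_bigr => j _.
by case: ltnP => // le_mj; rewrite F0 // le_mj ltn_ord.
Qed.

Section Generations.
Variables (R : realFieldType) (h : nat) (lamG lamL gam : R).
Hypotheses (h_ge2 : (2 <= h)%N) (lamL_gt0 : 0 < lamL) (gam_gt0 : 0 < gam).

Let h_gt0 : (0 < h)%N. Proof. exact: ltnW. Qed.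

Local Notation mu := (mu lamL gam h).
Local Notation xgen := (xgen lamG lamL gam h).

Definition ydesc (n d : nat) : R :=
  (ygen lamG lamL gam h n *m abcol h (gen_mean lamL gam d)) 0 0.

Lemma ydescS n d : ydesc n.+1 d = ydesc n d.+1 + lamG / gam * mu d * ydesc n 0.
Proof.
rewrite /ydesc /= -mulmxA Mmx_gen_mean // !mul_row_abcol mulr_sumr -big_split /=.
by apply: eq_bigr => t _; rewrite gen_mean0; ring.
Qed.

Lemma ydesc0 d : ydesc 0 d = mu d.
Proof.
rewrite /ydesc mul_row_abcol mu_gen_mean // (eq_bigr (fun t : hstate h =>
  (true && ((sa t == h.-1) && (sb t == 1%N)))%:R * gen_mean lamL gam d (sa t) (sb t))).
  by rewrite sum_hstate_at ?mul1r // /valid_ab => _; apply/orP; left; apply/and3P; split; lia.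
by move=> t _; rewrite /y0 mxE enum_rankK.
Qed.

Lemma sum_yent n : \sum_(s : hstate h) yent lamG lamL gam n s = ydesc n 0.
Proof. by rewrite /ydesc mul_row_abcol; apply: eq_bigr => t _; rewrite gen_mean0 mulr1. Qed.

Lemma yent_init_S n (s : hstate h) : is_init s ->
  yent lamG lamL gam n.+1 s = lamG / gam * ydesc n 0.
Proof.
move=> /andP[/eqP a_s /eqP b_s].
have -> : yent lamG lamL gam n.+1 s = (ygen lamG lamL gam h n.+1
            *m abcol h (fun a b => ((a == h.-1) && (b == 1%N))%:R)) 0 0.
  rewrite mul_row_abcol (bigD1 s) //= a_s b_s !eqxx mulr1 big1 ?addr0 // => t ts.
  case: andP => [[/eqP a_t /eqP b_t]|_]; last by rewrite mulr0.
  by case/eqP: ts; apply: hstate_ab_inj; congruence.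
rewrite /= -mulmxA Mmx_init // /ydesc !mul_row_abcol mulr_sumr.
by apply: eq_bigr => t _; rewrite gen_mean0 mulr1 mulrC.
Qed.

Lemma yent_init_0 (s : hstate h) : is_init s -> yent lamG lamL gam 0 s = 1.
Proof. by move=> init_s; rewrite /yent /= /y0 mxE enum_rankK init_s. Qed.

Lemma xhist_nth n m : nth (fun _ => 0) (xhist lamG lamL gam h n) m =
  if (m <= n)%N then head (fun _ => 0) (xhist lamG lamL gam h (n - m)) else (fun _ => 0).
Proof. by elim: n m => [|n IHn] [|m] //=; case: m. Qed.

Lemma xgen_S0 n : xgen n.+1 0 = lamG / gam * \sum_(k < h) xgen n k.
Proof. by rewrite /xgen /= /x_step leqNgt (ltnW h_ge2). Qed.

Lemma xgen_gen i n : (0 < i < h)%N -> xgen n i = (i <= n)%N%:R * (mu i * xgen (n - i) 0).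
Proof.
case/andP=> i_gt0 lt_ih; case: n => [|n].
  by rewrite /xgen /= /x_init (gtn_eqF i_gt0) leqNgt i_gt0 mul0r.
rewrite /xgen /= /x_step leqNgt lt_ih (gtn_eqF i_gt0) /= xhist_nth -subSS prednK //.
have -> : (i.-1 <= n)%N = (i <= n.+1)%N by rewrite -ltnS prednK.
by case: leqP => _ /=; rewrite ?mul1r ?mul0r ?mulr0.
Qed.

Lemma sum_xgen n : \sum_(j < h) xgen n j = \sum_(j < n.+1) xgen (n - j) 0 * mu j.
Proof.
pose H j := (j <= n)%N%:R * (xgen (n - j) 0 * mu j).
transitivity (\sum_(j < h) H j).
  apply: eq_bigr => -[[|j] lt_jh] _; first by rewrite /H mu0 // subn0 !mulr1 mul1r.
  by rewrite xgen_gen // /H [mu _ * _]mulrC.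
transitivity (\sum_(j < h + n.+1) H j).
  by apply: big_ord_widen_eq0 => [|j /andP[le_hj _]]; rewrite ?leq_addr // /H mu_eq0 ?mulr0.
rewrite [RHS](eq_bigr (fun j : 'I_n.+1 => H j)) => [|j _]; last by rewrite /H -ltnS ltn_ord mul1r.
symmetry; apply: big_ord_widen_eq0 => [|j /andP[lt_nj _]]; first exact: leq_addl.
by rewrite /H leqNgt lt_nj mul0r.
Qed.

Lemma ydesc_xgen n d : ydesc n d = \sum_(j < n.+1) xgen (n - j) 0 * mu (j + d).
Proof.
elim: n d => [|n IHn] d; first by rewrite ydesc0 // big_ord1 subn0 add0n mul1r.
rewrite ydescS // !IHn [RHS]big_ord_recl subn0 xgen_S0 sum_xgen add0n.
under [X in _ = _ + X]eq_bigr => j _ do rewrite lift0 subSS addSnnS.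
have -> : \sum_(j < n.+1) xgen (n - j) 0 * mu (j + 0) = \sum_(j < n.+1) xgen (n - j) 0 * mu j.
  by apply: eq_bigr => j _; rewrite addn0.
ring.
Qed.

Lemma ydesc0_sum_xgen n : ydesc n 0 = \sum_(j < h) xgen n j.
Proof. by rewrite ydesc_xgen sum_xgen; apply: eq_bigr => j _; rewrite addn0. Qed.

End Generations.

Unset Implicit Arguments.

Theorem lemma3p1 (R : realFieldType) (h : nat) (lamG lamL gam : R) :
  (2 <= h)%N -> 0 < lamG -> 0 < lamL -> 0 < gam ->
  forall n : nat,
    (forall s : hstate h, is_init s ->
       yent lamG lamL gam n s = xgen lamG lamL gam h n 0)
    /\ \sum_(s : hstate h) yent lamG lamL gam n s
       = \sum_(j < h) xgen lamG lamL gam h n j.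
Proof.
move=> h_ge2 _ lamL_gt0 gam_gt0 n; split=> [s init_s|].
  case: n => [|n]; first by rewrite yent_init_0.
  by rewrite yent_init_S // ydesc0_sum_xgen // xgen_S0.
by rewrite sum_yent // ydesc0_sum_xgen.
Qed.
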